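(* Let $n\ge 4$ and let $f^{(n)}$ be a symmetric form of degree $4$ in $n$ variables. If $f^{(n)}$ is a sum of squares, then it can be written as $$f^{(n)}=\alpha_{11}p_{(1^4)}+2\alpha_{12}p_{(2,1^2)}+\alpha_{22}p_{(2^2)}+\beta_{11}\left(p_{(2,1^2)}-p_{(1^4)}\right)+2\beta_{12}\left(p_{(3,1)}-p_{(2,1^2)}\right)+\beta_{22}\left(p_{(4)}-p_{(2^2)}\right)$$ $$+\gamma\left(\tfrac12 p_{(1^4)}-p_{(2,1^2)}+\tfrac{n^2-3n+3}{2n^2}p_{(2^2)}+\tfrac{2n-2}{n^2}p_{(3,1)}+\tfrac{1-n}{2n^2}p_{(4)}\right)$$ with $\gamma\ge 0$ and the matrices $\begin{pmatrix}\alpha_{11}&\alpha_{12}\\ \alpha_{12}&\alpha_{22}\end{pmatrix}$ and $\begin{pmatrix}\beta_{11}&\beta_{12}\\ \beta_{12}&\beta_{22}\end{pmatrix}$ positive semidefinite.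
   Context: $p_i=\frac1n(x_1^i+\dots+x_n^i)$ and $p_\lambda=\prod_i p_{\lambda_i}$ for a partition $\lambda$; e.g. $p_{(2,1^2)}=p_2p_1^2$, $p_{(1^4)}=p_1^4$, $p_{(2^2)}=p_2^2$, $p_{(3,1)}=p_3p_1$, $p_{(4)}=p_4$. *)

From HB Require Import structures.
From mathcomp Require Import all_boot all_order all_algebra.
From mathcomp Require Import reals.
From mathcomp Require Import mpoly.
Set Implicit Arguments. Unset Strict Implicit. Unset Printing Implicit Defensive.
Import Order.TTheory GRing.Theory Num.Theory.
Local Open Scope ring_scope.

Definition psum (R : realType) (n : nat) (i : nat) : {mpoly R[n]} :=
  (n%:R)^-1 *: \sum_(j < n) 'X_j ^+ i.

Definition is_sos (R : realType) (n : nat) (f : {mpoly R[n]}) : Prop :=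
  exists s : seq {mpoly R[n]}, f = \sum_(q <- s) q ^+ 2.

Definition psd (R : realType) (m : nat) (A : 'M[R]_m) : Prop :=
  A^T = A /\ forall v : 'cV[R]_m, 0 <= (v^T *m A *m v) ord0 ord0.

Definition sym2 (R : realType) (a b c : R) : 'M[R]_2 :=
  \matrix_(i < 2, j < 2)
    (if (val i == 0%N) && (val j == 0%N) then a
     else if (val i == 1%N) && (val j == 1%N) then c else b).

From HB Require Import structures.
From mathcomp Require Import all_boot all_order all_algebra.
From mathcomp Require Import reals.
From mathcomp Require Import mpoly.
From mathcomp Require Import fingroup perm.
From mathcomp Require Import ring.
Import Order.TTheory GRing.Theory Num.Theory.
Local Open Scope ring_scope.
Set Implicit Arguments. Unset Strict Implicit. Unset Printing Implicit Defensive.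

(* Averaging over S_n fixes the symmetric form f, so f is the symmetrization
   of a sum of squares q_k^2, and by comparing leading and lowest-degree terms
   every q_k may be taken to be a quadratic form.  The symmetrization of q^2
   is computed through the monomial means m_e (the S_n-averages of the
   monomials x_1^e_1 ... x_k^e_k), which the recursion p_k * m_e = ... expresses
   in the power sums.  Splitting q into its S_n-isotypic components, the
   trivial component contributes a rank-one alpha-matrix, the standard one a
   Gram (hence positive semidefinite) beta-matrix, and the remaining component
   a nonnegative multiple gamma of the last form. *)

(* Scalings become products with constant polynomials, so that [ring] applies. *)
Ltac scalar_ring := rewrite -!mul_mpolyC
  ?(rmorphD, rmorphB, rmorphN, rmorphM, rmorph1, rmorph0) /=; ring.

HB.lock Definition symmetrize (R : numFieldType) (n : nat) (g : {mpoly R[n]}) :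
  {mpoly R[n]} := (n`!%:R)^-1 *: \sum_(s : 'S_n) msym s g.
Arguments symmetrize {R n}.

Section Symmetrize.
Variables (R : numFieldType) (n : nat).
Local Notation MP := {mpoly R[n]}.

Lemma symmetrize_is_linear : linear (@symmetrize R n).
Proof.
move=> c g h; rewrite unlock scalerA mulrC -scalerA -scalerDr.
congr (_ *: _); rewrite scaler_sumr -big_split /=; apply: eq_bigr => s _.
by rewrite msymD msymZ.
Qed.

HB.instance Definition _ :=
  GRing.isLinear.Build R MP MP _ (@symmetrize R n) symmetrize_is_linear.

Lemma symmetrize_id (g : MP) : g \is symmetric -> symmetrize g = g.
Proof.
move=> /issymP gsym; rewrite unlock (eq_bigr (fun _ => g)) => [|s _]; last exact: gsym.
rewrite sumr_const card_Sn -scaler_nat scalerA mulVf ?scale1r //.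
by rewrite pnatr_eq0 -lt0n fact_gt0.
Qed.

Lemma symmetrize_msym s (g : MP) : symmetrize (msym s g) = symmetrize g.
Proof.
rewrite unlock; congr (_ *: _).
by rewrite [RHS](reindex_inj (mulgI s)) /=; apply: eq_bigr => t _; rewrite msymMm.
Qed.

Lemma symmetrizeMl (a g : MP) : a \is symmetric -> symmetrize (a * g) = a * symmetrize g.
Proof.
move=> /issymP asym; rewrite unlock -scalerAr mulr_sumr.
by congr (_ *: _); apply: eq_bigr => s _; rewrite msymM asym.
Qed.

Lemma msymX1 (s : 'S_n) i : msym s ('X_i : MP) = 'X_(s i).
Proof.
rewrite msymX; congr 'X_[_]; apply/mnmP => j; rewrite !mnmE.
by rewrite -(inj_eq (@perm_inj _ s)) permKV eq_sym.
Qed.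

Definition xmono (a : seq 'I_n) (e : seq nat) : MP :=
  \prod_(ik <- zip a e) 'X_ik.1 ^+ ik.2.

Lemma msym_xmono (s : 'S_n) a e : msym s (xmono a e) = xmono (map s a) e.
Proof.
elim: a e => [|i a IHa] [|k e]; rewrite /xmono /= ?big_nil ?rmorph1 //.
by rewrite !big_cons rmorphM rmorphXn /= msymX1 IHa.
Qed.

Lemma perm_map_uniq (a b : seq 'I_n) :
  uniq a -> uniq b -> size a = size b -> exists s : 'S_n, map s a = b.
Proof.
elim: a b => [|x a IHa] [|y b] //=; first by exists 1%g.
move=> /andP[xa ua] /andP[yb ub] [sz].
have [s sab] := IHa b ua ub sz.
exists (s * tperm (s x) y)%g; rewrite permM tpermL; congr (_ :: _).
rewrite -sab; apply/eq_in_map => z za /=; rewrite permM tpermD //.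
  by rewrite (inj_eq perm_inj); apply: contraNneq xa => ->.
by apply: contraNneq yb => ->; rewrite -sab map_f.
Qed.

Lemma symmetrize_xmono a b e : uniq a -> uniq b -> size a = size b ->
  symmetrize (xmono a e) = symmetrize (xmono b e).
Proof.
move=> ua ub sz; have [s <-] := perm_map_uniq ua ub sz.
by rewrite -msym_xmono symmetrize_msym.
Qed.

Lemma xmono_rcons a e j k : size a = size e ->
  'X_j ^+ k * xmono a e = xmono (rcons a j) (rcons e k).
Proof. by move=> sz; rewrite /xmono zip_rcons // big_rcons /= mulrC. Qed.

Lemma xmono_set_nth (i0 : 'I_n) a e t k : size a = size e -> (t < size a)%N ->
  'X_(nth i0 a t) ^+ k * xmono a e = xmono a (set_nth 0%N e t (nth 0%N e t + k)).
Proof.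
elim: a e t => [|i a IHa] [|l e] [|t] //= [sz] lt; rewrite /xmono /= !big_cons.
  by rewrite exprD mulrCA mulrA.
by rewrite mulrCA; congr (_ * _); exact: IHa.
Qed.

End Symmetrize.

Arguments xmono {R n}.

Section NatCast.
Variables (R : numFieldType) (n : nat).
Local Notation N := (n%:R : R).

Lemma subn_natr_neq0 k : (k < n)%N -> N - k%:R != 0.
Proof. by move=> lt_kn; rewrite -(natrB _ (ltnW lt_kn)) pnatr_eq0 subn_eq0 -ltnNge. Qed.

(* A rewrite multirule discharging the side conditions left by [field]. *)
Lemma natr_gt3_neq0 : (3 < n)%N ->
  ((N != 0) * (N - 1 != 0) * (N - 2%:R != 0) * (N - 3%:R != 0))%type.
Proof.
move=> n_gt3; have sub_neq0 k : (k <= 3)%N -> N - k%:R != 0.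
  by move=> le_k3; apply: subn_natr_neq0; exact: leq_ltn_trans n_gt3.
split; first split; first split.
- by have := sub_neq0 0%N isT; rewrite subr0.
- by have := sub_neq0 1%N isT.
- exact: sub_neq0.
- exact: sub_neq0.
Qed.

End NatCast.

Arguments natr_gt3_neq0 {R n}.

Section MonomialMeans.
Variables (R : realType) (n : nat).
Local Notation MP := {mpoly R[n]}.
Local Notation p := (psum R n).
Local Notation N := (n%:R : R).

Lemma psum_sym k : p k \is symmetric.
Proof.
apply/issymP => s; rewrite /psum msymZ; congr (_ *: _).
rewrite raddf_sum /= [RHS](reindex_inj (@perm_inj _ s)) /=.
by apply: eq_bigr => j _; rewrite rmorphXn /= msymX1.
Qed.

(* [mmean e] is the average of x_(j_1)^(e_1) ... x_(j_k)^(e_k) over all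
   injective choices of the indices j_1, ..., j_k. *)
Definition mmean (e : seq nat) : MP :=
  symmetrize (xmono (take (size e) (enum 'I_n)) e).

Lemma size_uniq_ord (a : seq 'I_n) : uniq a -> (size a <= n)%N.
Proof. by move/card_uniqP <-; rewrite -[n in (_ <= n)%N]card_ord max_card. Qed.

Lemma size_take_enum_ord k : (k <= n)%N -> size (take k (enum 'I_n)) = k.
Proof. by rewrite size_take size_enum_ord leq_eqVlt => /orP[/eqP->|->]; rewrite ?ltnn. Qed.

Lemma mmean_xmono a e : uniq a -> size a = size e -> symmetrize (xmono a e) = mmean e.
Proof.
move=> ua sa; apply: symmetrize_xmono => //; first by rewrite take_uniq ?enum_uniq.
by rewrite size_take_enum_ord // -sa size_uniq_ord.
Qed.

Lemma mmean_perm e f : (size e <= n)%N -> perm_eq e f -> mmean e = mmean f.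
Proof.
case: e => [|e0 e'] le_en pef.
  by move: pef; rewrite perm_sym => /perm_nilP ->.
set e := e0 :: e' in le_en pef *; pose i0 : 'I_n := Ordinal le_en.
set a := take (size e) (enum 'I_n).
have ua : uniq a by rewrite take_uniq ?enum_uniq.
have sa : size a = size e by rewrite size_take_enum_ord.
have [Is permIs ->] := perm_iotaP 0%N (etrans (perm_sym f e) pef).
have ltIs t : t \in Is -> (t < size e)%N by rewrite (perm_mem permIs) mem_iota.
set b := map (nth i0 a) Is.
have ub : uniq b.
  rewrite map_inj_in_uniq ?(perm_uniq permIs) ?iota_uniq // => t u tI uI /eqP.
  by rewrite nth_uniq ?sa ?ltIs // => /eqP.
rewrite -(@mmean_xmono b (map (nth 0%N e) Is)) ?size_map // /mmean -/a.
apply: congr1; apply: perm_big.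
rewrite -{1}[zip a e](mkseq_nth (i0, 0%N)) size_zip sa minnn zip_map.
rewrite (@eq_map _ _ _ (nth (i0, 0%N) (zip a e))) => [|t]; last by rewrite nth_zip.
by rewrite perm_map // perm_sym.
Qed.

(* The extra variable of p_k either is new, which happens for n - size e of
   the n choices, or equals the t-th variable of the monomial. *)
Lemma psum_mul_mmean k e : (size e < n)%N ->
  p k * mmean e = N^-1 *: (mmean (rcons e k) *+ (n - size e)
    + \sum_(t < size e) mmean (set_nth 0%N e t (nth 0%N e t + k))).
Proof.
move=> lt_en; pose i0 : 'I_n := Ordinal (leq_ltn_trans (leq0n _) lt_en).
set a := take (size e) (enum 'I_n).
have ua : uniq a by rewrite take_uniq ?enum_uniq.
have sa : size a = size e by rewrite size_take_enum_ord // ltnW.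
rewrite {1}/mmean -/a -symmetrizeMl ?psum_sym // /psum -scalerAl mulr_suml.
rewrite linearZ linear_sum /=; congr (_ *: _).
rewrite (bigID (mem a)) /= addrC; congr (_ + _).
  rewrite (eq_bigr (fun _ => mmean (rcons e k))) => [|j ja]; last first.
    by rewrite xmono_rcons // mmean_xmono ?rcons_uniq ?ja ?size_rcons ?sa.
  rewrite sumr_const; congr (_ *+ _).
  by rewrite -[n in RHS](card_ord n) -(cardC (mem a)) (card_uniqP ua) sa addKn.
rewrite -big_uniq //= (big_nth i0) sa big_mkord; apply: eq_bigr => t _.
by rewrite xmono_set_nth ?sa // mmean_xmono // size_set_nth sa (maxn_idPr _).
Qed.

Lemma mmean_rcons k e : (size e < n)%N ->
  mmean (rcons e k) = (N - (size e)%:R)^-1 *: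
    (N *: (p k * mmean e) - \sum_(t < size e) mmean (set_nth 0%N e t (nth 0%N e t + k))).
Proof.
move=> lt_en; have N_neq0 : N != 0 by rewrite pnatr_eq0 -lt0n (leq_ltn_trans _ lt_en).
rewrite psum_mul_mmean // scalerA mulfV // scale1r addrK -scaler_nat.
by rewrite (natrB _ (ltnW lt_en)) scalerA mulVf ?scale1r ?subn_natr_neq0.
Qed.

Lemma mmean1 k : (0 < n)%N -> mmean [:: k] = p k.
Proof.
move=> n_gt0; have := psum_mul_mmean k (n_gt0 : (size [::] < n)%N).
have -> : mmean [::] = 1 by rewrite /mmean take0 /xmono big_nil symmetrize_id ?rpred1.
rewrite mulr1 big_ord0 addr0 subn0 -scaler_nat scalerA mulVf ?scale1r //.
by rewrite pnatr_eq0 -lt0n.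
Qed.

End MonomialMeans.

Section PowerSumCoordinates.
Variables (R : realType) (n : nat).
Hypothesis n_gt3 : (3 < n)%N.
Local Notation MP := {mpoly R[n]}.
Local Notation p := (psum R n).
Local Notation N := (n%:R : R).

Definition pc2 a b : MP := a *: p 1 ^+ 2 + b *: p 2.
Definition pc3 a b c : MP := a *: p 1 ^+ 3 + b *: (p 2 * p 1) + c *: p 3.
Definition pc4 a b c d e : MP :=
  a *: p 1 ^+ 4 + b *: (p 2 * p 1 ^+ 2) + c *: p 2 ^+ 2 + d *: (p 3 * p 1) + e *: p 4.

Local Ltac pc_ring := rewrite /pc2 /pc3 /pc4; scalar_ring.

Lemma pc2B a b a' b' : pc2 a b - pc2 a' b' = pc2 (a - a') (b - b').
Proof. by pc_ring. Qed.
Lemma pc2Z c a b : c *: pc2 a b = pc2 (c * a) (c * b).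
Proof. by pc_ring. Qed.
Lemma pc3D a b c a' b' c' : pc3 a b c + pc3 a' b' c' = pc3 (a + a') (b + b') (c + c').
Proof. by pc_ring. Qed.
Lemma pc3B a b c a' b' c' : pc3 a b c - pc3 a' b' c' = pc3 (a - a') (b - b') (c - c').
Proof. by pc_ring. Qed.
Lemma pc3Z k a b c : k *: pc3 a b c = pc3 (k * a) (k * b) (k * c).
Proof. by pc_ring. Qed.
Lemma pc4D a b c d e a' b' c' d' e' :
  pc4 a b c d e + pc4 a' b' c' d' e' = pc4 (a + a') (b + b') (c + c') (d + d') (e + e').
Proof. by pc_ring. Qed.
Lemma pc4B a b c d e a' b' c' d' e' :
  pc4 a b c d e - pc4 a' b' c' d' e' = pc4 (a - a') (b - b') (c - c') (d - d') (e - e').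
Proof. by pc_ring. Qed.
Lemma pc4Z k a b c d e : k *: pc4 a b c d e = pc4 (k * a) (k * b) (k * c) (k * d) (k * e).
Proof. by pc_ring. Qed.
Lemma psum1_mul_pc2 a b : p 1 * pc2 a b = pc3 a b 0.
Proof. by pc_ring. Qed.
Lemma psum1_mul_pc3 a b c : p 1 * pc3 a b c = pc4 a b 0 c 0.
Proof. by pc_ring. Qed.

Lemma pc_psum11 : p 1 * p 1 = pc2 1 0. Proof. by pc_ring. Qed.
Lemma pc_psum2 : p 2 = pc2 0 1. Proof. by pc_ring. Qed.
Lemma pc_psum12 : p 1 * p 2 = pc3 0 1 0. Proof. by pc_ring. Qed.
Lemma pc_psum3 : p 3 = pc3 0 0 1. Proof. by pc_ring. Qed.
Lemma pc_psum13 : p 1 * p 3 = pc4 0 0 0 1 0. Proof. by pc_ring. Qed.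
Lemma pc_psum22 : p 2 * p 2 = pc4 0 0 1 0 0. Proof. by pc_ring. Qed.
Lemma pc_psum4 : p 4 = pc4 0 0 0 0 1. Proof. by pc_ring. Qed.

Local Notation m := (mmean R n).
Let n_gt0 : (0 < n)%N. Proof. exact: ltn_trans n_gt3. Qed.

Local Ltac coef_field := f_equal; field; rewrite ?(natr_gt3_neq0 n_gt3).

Lemma mmean11 : m [:: 1; 1] = pc2 (N / (N - 1)) (- (N - 1)^-1).
Proof.
rewrite (@mmean_rcons R n 1 [:: 1]) ?(ltn_trans _ n_gt3) //= big_ord1 /= !mmean1 //.
by rewrite pc_psum11 pc_psum2 pc2Z pc2B pc2Z; coef_field.
Qed.

Lemma mmean21 : m [:: 2; 1] = pc3 0 (N / (N - 1)) (- (N - 1)^-1).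
Proof.
rewrite (@mmean_rcons R n 1 [:: 2]) ?(ltn_trans _ n_gt3) //= big_ord1 /= !mmean1 //.
by rewrite pc_psum12 pc_psum3 pc3Z pc3B pc3Z; coef_field.
Qed.

Lemma mmean31 : m [:: 3; 1] = pc4 0 0 0 (N / (N - 1)) (- (N - 1)^-1).
Proof.
rewrite (@mmean_rcons R n 1 [:: 3]) ?(ltn_trans _ n_gt3) //= big_ord1 /= !mmean1 //.
by rewrite pc_psum13 pc_psum4 pc4Z pc4B pc4Z; coef_field.
Qed.

Lemma mmean22 : m [:: 2; 2] = pc4 0 0 (N / (N - 1)) 0 (- (N - 1)^-1).
Proof.
rewrite (@mmean_rcons R n 2 [:: 2]) ?(ltn_trans _ n_gt3) //= big_ord1 /= !mmean1 //.
by rewrite pc_psum22 pc_psum4 pc4Z pc4B pc4Z; coef_field.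
Qed.

Let D2 := (N - 1) * (N - 2%:R).
Let D3 := (N - 1) * (N - 2%:R) * (N - 3%:R).

Lemma mmean211 :
  m [:: 2; 1; 1] = pc4 0 (N ^+ 2 / D2) (- N / D2) (- 2%:R * N / D2) (2%:R / D2).
Proof.
rewrite (@mmean_rcons R n 1 [:: 2; 1]) ?(ltn_trans _ n_gt3) //= !big_ord_recr big_ord0 /=.
rewrite add0r mmean21 mmean31 mmean22 psum1_mul_pc3 pc4D pc4Z pc4B pc4Z.
by rewrite /D2; coef_field.
Qed.

Lemma mmean111 : m [:: 1; 1; 1] = pc3 (N ^+ 2 / D2) (- 3%:R * N / D2) (2%:R / D2).
Proof.
rewrite (@mmean_rcons R n 1 [:: 1; 1]) ?(ltn_trans _ n_gt3) //= !big_ord_recr big_ord0 /=.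
rewrite add0r (@mmean_perm _ _ [:: 1; 2] [:: 2; 1]) ?(ltn_trans _ n_gt3) //.
rewrite mmean21 mmean11 psum1_mul_pc2 pc3D pc3Z pc3B pc3Z.
by rewrite /D2; coef_field.
Qed.

Lemma mmean1111 : m [:: 1; 1; 1; 1] =
  pc4 (N ^+ 3 / D3) (- 6%:R * N ^+ 2 / D3) (3%:R * N / D3) (8%:R * N / D3) (- 6%:R / D3).
Proof.
rewrite (@mmean_rcons R n 1 [:: 1; 1; 1]) //= !big_ord_recr big_ord0 /= add0r.
rewrite (@mmean_perm _ _ [:: 1; 2; 1] [:: 2; 1; 1]) ?(ltn_trans _ n_gt3) //.
rewrite (@mmean_perm _ _ [:: 1; 1; 2] [:: 2; 1; 1]) ?(ltn_trans _ n_gt3) //.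
rewrite mmean211 mmean111 psum1_mul_pc3 !pc4D pc4Z pc4B pc4Z.
by rewrite /D3 /D2; coef_field.
Qed.

End PowerSumCoordinates.

Section QuarticMeans.
Variables (R : realType) (n : nat).
Local Notation MP := {mpoly R[n]}.
Local Notation p := (psum R n).
Local Notation m := (mmean R n).

Definition kron (i j : 'I_n) : R := (i == j)%:R.

Lemma kronxx i : kron i i = 1. Proof. by rewrite /kron eqxx. Qed.
Lemma kron_neq i j : i != j -> kron i j = 0. Proof. by rewrite /kron => /negbTE ->. Qed.

Lemma sum_kron (F : 'I_n -> R) i : \sum_k F k * kron i k = F i.
Proof.
rewrite (bigD1 i) //= kronxx mulr1 big1 ?addr0 // => k ki.
by rewrite kron_neq ?mulr0 // eq_sym.
Qed.

Lemma sum2_kronl (G : 'I_n -> 'I_n -> R) i :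
  \sum_k \sum_l G k l * kron i k = \sum_l G i l.
Proof.
rewrite -(sum_kron (fun k => \sum_l G k l) i); apply: eq_bigr => k _.
by rewrite mulr_suml.
Qed.

Lemma sum2_kronr (G : 'I_n -> 'I_n -> R) i :
  \sum_k \sum_l G k l * kron i l = \sum_k G k i.
Proof. by apply: eq_bigr => k _; rewrite sum_kron. Qed.

Lemma sum2_kron2 (G : 'I_n -> 'I_n -> R) i j :
  \sum_k \sum_l G k l * (kron i k * kron j l) = G i j.
Proof.
rewrite -(sum_kron (fun k => G k j) i); apply: eq_bigr => k _.
rewrite -(sum_kron (fun l => G k l * kron i k) j) /=; apply: eq_bigr => l _.
by rewrite mulrA [_ * kron j l]mulrC mulrA.
Qed.

Lemma sum2D (F G : 'I_n -> 'I_n -> R) :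
  \sum_k \sum_l (F k l + G k l) = \sum_k \sum_l F k l + \sum_k \sum_l G k l.
Proof. by rewrite -big_split; apply: eq_bigr => k _; rewrite big_split. Qed.

Lemma sum_scale_kron (F : 'I_n -> MP) (k : 'I_n -> R) a :
  \sum_i (k i * kron i a) *: F i = k a *: F a.
Proof.
rewrite (bigD1 a) //= kronxx mulr1 big1 ?addr0 // => i ia.
by rewrite kron_neq ?mulr0 ?scale0r.
Qed.

Lemma symmetrize_Xn i k : symmetrize ('X_i ^+ k : MP) = p k.
Proof.
rewrite -mmean1 ?(leq_ltn_trans (leq0n i) (ltn_ord i)) // -(@mmean_xmono _ _ [:: i]) //.
by rewrite /xmono /= big_cons big_nil mulr1.
Qed.

Lemma symmetrize_X2 i j k l : i != j ->
  symmetrize ('X_i ^+ k * 'X_j ^+ l : MP) = m [:: k; l].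
Proof.
move=> ij; rewrite -(@mmean_xmono _ _ [:: i; j]) /= ?inE ?ij //.
by rewrite /xmono /= !big_cons big_nil mulr1.
Qed.

Lemma symmetrize_X3 i j h k l t : uniq [:: i; j; h] ->
  symmetrize ('X_i ^+ k * 'X_j ^+ l * 'X_h ^+ t : MP) = m [:: k; l; t].
Proof.
move=> u; rewrite -(@mmean_xmono _ _ [:: i; j; h]) //.
by rewrite /xmono /= !big_cons big_nil mulr1 !mulrA.
Qed.

Lemma symmetrize_X1111 i j h g : uniq [:: i; j; h; g] ->
  symmetrize ('X_i * 'X_j * 'X_h * 'X_g : MP) = m [:: 1; 1; 1; 1].
Proof.
move=> u; rewrite -(@mmean_xmono _ _ [:: i; j; h; g]) //.
by rewrite /xmono /= !big_cons big_nil mulr1 !expr1 !mulrA.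
Qed.

Lemma symmetrize_sqr_sqr i j : symmetrize ('X_i ^+ 2 * 'X_j ^+ 2 : MP) =
  m [:: 2; 2] + kron i j *: (p 4 - m [:: 2; 2]).
Proof.
have [<-|ij] := eqVneq i j; last by rewrite symmetrize_X2 // kron_neq // scale0r addr0.
by rewrite -exprD symmetrize_Xn kronxx scale1r addrC subrK.
Qed.

Lemma symmetrize_sqr_mul i j k : j != k -> symmetrize ('X_i ^+ 2 * ('X_j * 'X_k) : MP) =
  m [:: 2; 1; 1] + (kron i j + kron i k) *: (m [:: 3; 1] - m [:: 2; 1; 1]).
Proof.
move=> jk; case: (eqVneq i j) jk => [<-|ij] jk.
  rewrite (_ : _ * _ = 'X_i ^+ 3 * 'X_k ^+ 1); last by ring.
  by rewrite symmetrize_X2 // kronxx kron_neq // addr0 scale1r addrC subrK.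
case: (eqVneq i k) jk => [<-|ik] jk.
  rewrite (_ : _ * _ = 'X_i ^+ 3 * 'X_j ^+ 1); last by ring.
  by rewrite symmetrize_X2 1?eq_sym // kronxx kron_neq // add0r scale1r addrC subrK.
rewrite (_ : _ * _ = 'X_i ^+ 2 * 'X_j ^+ 1 * 'X_k ^+ 1); last by ring.
rewrite symmetrize_X3 ?(kron_neq ij) ?(kron_neq ik) ?addr0 ?scale0r ?addr0 //.
by rewrite /= !inE negb_or ij ik jk.
Qed.

Lemma symmetrize_mul_mul i j k l : i != j -> k != l ->
  symmetrize ('X_i * 'X_j * ('X_k * 'X_l) : MP) = m [:: 1; 1; 1; 1]
  + (kron i k + kron i l + kron j k + kron j l) *: (m [:: 2; 1; 1] - m [:: 1; 1; 1; 1])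
  + (kron i k * kron j l + kron i l * kron j k)
    *: (m [:: 2; 2] - 2%:R *: m [:: 2; 1; 1] + m [:: 1; 1; 1; 1]).
Proof.
move=> ij kl; have ji : j != i by rewrite eq_sym.
have uniq3 (a b c : 'I_n) : a != b -> a != c -> b != c -> uniq [:: a; b; c].
  by move=> ab ac bc; rewrite /= !inE negb_or ab ac bc.
case: (eqVneq i k) kl => [<-|ik] kl.
  case: (eqVneq j l) kl => [<-|jl] kl.
    rewrite (_ : _ * _ = 'X_i ^+ 2 * 'X_j ^+ 2); last by ring.
    by rewrite symmetrize_X2 // kronxx (kron_neq ij) (kron_neq ji) kronxx; scalar_ring.
  rewrite (_ : _ * _ = 'X_i ^+ 2 * 'X_j ^+ 1 * 'X_l ^+ 1); last by ring.
  rewrite symmetrize_X3; last exact: uniq3.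
  rewrite kronxx (kron_neq kl) (kron_neq ji) (kron_neq jl).
  by scalar_ring.
case: (eqVneq i l) kl => [<-|il] kl.
  case: (eqVneq j k) kl ik => [<-|jk] kl ik.
    rewrite (_ : _ * _ = 'X_i ^+ 2 * 'X_j ^+ 2); last by ring.
    by rewrite symmetrize_X2 // kronxx (kron_neq ij) (kron_neq ji) kronxx; scalar_ring.
  rewrite (_ : _ * _ = 'X_i ^+ 2 * 'X_j ^+ 1 * 'X_k ^+ 1); last by ring.
  rewrite symmetrize_X3; last exact: uniq3.
  rewrite kronxx (kron_neq ik) (kron_neq ji) (kron_neq jk).
  by scalar_ring.
case: (eqVneq j k) kl ik => [<-|jk] kl ik.
  rewrite (_ : _ * _ = 'X_j ^+ 2 * 'X_i ^+ 1 * 'X_l ^+ 1); last by ring.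
  rewrite symmetrize_X3; last exact: uniq3.
  rewrite kronxx (kron_neq ik) (kron_neq il) (kron_neq kl).
  by scalar_ring.
case: (eqVneq j l) kl il => [<-|jl] kl il.
  rewrite (_ : _ * _ = 'X_j ^+ 2 * 'X_i ^+ 1 * 'X_k ^+ 1); last by ring.
  rewrite symmetrize_X3; last exact: uniq3.
  rewrite kronxx (kron_neq ik) (kron_neq il) (kron_neq jk).
  by scalar_ring.
rewrite mulrA symmetrize_X1111; last by rewrite /= !inE !negb_or ij ik il jk jl kl.
by rewrite (kron_neq ik) (kron_neq il) (kron_neq jk) (kron_neq jl); scalar_ring.
Qed.

End QuarticMeans.

Section LinearCombinationSums.
Variables (R : pzRingType) (V : lmodType R).

Section Single.
Variable I : finType.

Lemma sum_scale2 (a b : I -> R) (X Y : V) :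
  \sum_i (a i *: X + b i *: Y) = (\sum_i a i) *: X + (\sum_i b i) *: Y.
Proof. by rewrite big_split /= !scaler_suml. Qed.

Lemma sum_scale3 (a b c : I -> R) (X Y Z : V) :
  \sum_i (a i *: X + b i *: Y + c i *: Z) =
  (\sum_i a i) *: X + (\sum_i b i) *: Y + (\sum_i c i) *: Z.
Proof. by rewrite !big_split /= !scaler_suml. Qed.

End Single.

Variables I J : finType.

Lemma sum2_scale2 (a b : I -> J -> R) (X Y : V) :
  \sum_i \sum_j (a i j *: X + b i j *: Y) =
  (\sum_i \sum_j a i j) *: X + (\sum_i \sum_j b i j) *: Y.
Proof.
rewrite -sum_scale2; apply: eq_bigr => i _; exact: sum_scale2.
Qed.

Lemma sum2_scale3 (a b c : I -> J -> R) (X Y Z : V) :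
  \sum_i \sum_j (a i j *: X + b i j *: Y + c i j *: Z) =
  (\sum_i \sum_j a i j) *: X + (\sum_i \sum_j b i j) *: Y + (\sum_i \sum_j c i j) *: Z.
Proof.
rewrite -sum_scale3; apply: eq_bigr => i _; exact: sum_scale3.
Qed.

End LinearCombinationSums.

Section SymmetrizeQuadraticSquare.
Variables (R : realType) (n : nat) (d : 'I_n -> R) (O : 'I_n -> 'I_n -> R).
Hypothesis O_sym : forall i j, O i j = O j i.
Hypothesis O_diag0 : forall i, O i i = 0.
Local Notation MP := {mpoly R[n]}.
Local Notation p := (psum R n).
Local Notation m := (mmean R n).
Local Notation kron := (@kron R n).

Definition diagq : MP := \sum_i d i *: 'X_i ^+ 2.
Definition offq : MP := \sum_i \sum_j O i j *: ('X_i * 'X_j).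

Definition rowsum i := \sum_j O i j.
Definition sum_d := \sum_i d i.
Definition sum_d2 := \sum_i d i ^+ 2.
Definition sum_O := \sum_i rowsum i.
Definition sum_dr := \sum_i d i * rowsum i.
Definition sum_r2 := \sum_i rowsum i ^+ 2.
Definition sum_O2 := \sum_i \sum_j O i j ^+ 2.

Lemma rowsum_sym i : \sum_j O j i = rowsum i.
Proof. by apply: eq_bigr => j _; rewrite O_sym. Qed.

Lemma symmetrize_diagq_sqr :
  symmetrize (diagq * diagq) = (sum_d ^+ 2) *: m [:: 2; 2] + sum_d2 *: (p 4 - m [:: 2; 2]).
Proof.
have row i :
    symmetrize ('X_i ^+ 2 * diagq) = sum_d *: m [:: 2; 2] + d i *: (p 4 - m [:: 2; 2]).
  rewrite /diagq mulr_sumr linear_sum /=.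
  under eq_bigr => j _ do rewrite -scalerAr linearZ /= symmetrize_sqr_sqr scalerDr scalerA.
  by rewrite sum_scale2 (sum_kron d i).
rewrite {1}/diagq mulr_suml linear_sum /=.
under eq_bigr => i _ do rewrite -scalerAl linearZ /= row scalerDr !scalerA.
by rewrite sum_scale2 -mulr_suml expr2.
Qed.

Lemma symmetrize_diagq_offq : symmetrize (diagq * offq) =
  (sum_d * sum_O) *: m [:: 2; 1; 1] + (2%:R * sum_dr) *: (m [:: 3; 1] - m [:: 2; 1; 1]).
Proof.
have row i : symmetrize ('X_i ^+ 2 * offq) =
    sum_O *: m [:: 2; 1; 1] + (2%:R * rowsum i) *: (m [:: 3; 1] - m [:: 2; 1; 1]).
  have term j k : symmetrize ('X_i ^+ 2 * (O j k *: ('X_j * 'X_k))) =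
      O j k *: m [:: 2; 1; 1]
      + (O j k * (kron i j + kron i k)) *: (m [:: 3; 1] - m [:: 2; 1; 1]).
    rewrite -scalerAr linearZ /=; have [<-|jk] := eqVneq j k.
      by rewrite O_diag0 mul0r !scale0r addr0.
    by rewrite symmetrize_sqr_mul // scalerDr scalerA.
  rewrite /offq mulr_sumr linear_sum /=.
  under eq_bigr => j _ do rewrite mulr_sumr linear_sum /=.
  under eq_bigr => j _ do under eq_bigr => k _ do rewrite term.
  rewrite sum2_scale2; congr (_ *: _ + _ *: _).
  under eq_bigr => j _ do under eq_bigr => k _ do rewrite mulrDr.
  rewrite sum2D (eq_bigr (fun j => \sum_k O j k * kron i j)) //.
  by rewrite sum2_kronl sum2_kronr rowsum_sym mulr_natl mulr2n.
rewrite {1}/diagq mulr_suml linear_sum /=.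
under eq_bigr => i _ do rewrite -scalerAl linearZ /= row scalerDr !scalerA.
rewrite sum_scale2 -mulr_suml; congr (_ *: _ + _ *: _).
by rewrite /sum_dr mulr_sumr; apply: eq_bigr => i _; rewrite mulrCA.
Qed.

Lemma symmetrize_offq_sqr : symmetrize (offq * offq) =
  (sum_O ^+ 2) *: m [:: 1; 1; 1; 1]
  + (4%:R * sum_r2) *: (m [:: 2; 1; 1] - m [:: 1; 1; 1; 1])
  + (2%:R * sum_O2) *: (m [:: 2; 2] - 2%:R *: m [:: 2; 1; 1] + m [:: 1; 1; 1; 1]).
Proof.
set M1 := m [:: 1; 1; 1; 1]; set M2 := m [:: 2; 1; 1] - M1.
set M3 := m [:: 2; 2] - 2%:R *: m [:: 2; 1; 1] + M1.
have row i j : i != j -> symmetrize ('X_i * 'X_j * offq) =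
    sum_O *: M1 + (2%:R * (rowsum i + rowsum j)) *: M2 + (2%:R * O i j) *: M3.
  move=> ij; have term k l : symmetrize ('X_i * 'X_j * (O k l *: ('X_k * 'X_l))) =
      O k l *: M1 + (O k l * (kron i k + kron i l + kron j k + kron j l)) *: M2
      + (O k l * (kron i k * kron j l + kron i l * kron j k)) *: M3.
    rewrite -scalerAr linearZ /=; have [<-|kl] := eqVneq k l.
      by rewrite O_diag0 !mul0r !scale0r !addr0.
    by rewrite symmetrize_mul_mul // !scalerDr !scalerA.
  rewrite /offq mulr_sumr linear_sum /=.
  under eq_bigr => k _ do rewrite mulr_sumr linear_sum /=.
  under eq_bigr => k _ do under eq_bigr => l _ do rewrite term.
  rewrite sum2_scale3; congr (_ *: _ + _ *: _ + _ *: _).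
    under eq_bigr => k _ do under eq_bigr => l _ do rewrite !mulrDr.
    rewrite !sum2D (sum2_kronl O i) (sum2_kronr O i) (sum2_kronl O j) (sum2_kronr O j).
    by rewrite !rowsum_sym -/(rowsum i) -/(rowsum j); ring.
  under eq_bigr => k _ do under eq_bigr => l _ do rewrite mulrDr [kron i l * _]mulrC.
  by rewrite sum2D (sum2_kron2 O i j) (sum2_kron2 O j i) O_sym mulr_natl mulr2n.
rewrite {1}/offq mulr_suml linear_sum /=.
under eq_bigr => i _ do rewrite mulr_suml linear_sum /=.
have term i j : symmetrize (O i j *: ('X_i * 'X_j) * offq) =
    (O i j * sum_O) *: M1 + (O i j * (2%:R * (rowsum i + rowsum j))) *: M2
    + (O i j * (2%:R * O i j)) *: M3.
  rewrite -scalerAl linearZ /=; have [<-|ij] := eqVneq i j.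
    by rewrite O_diag0 !mul0r !scale0r !addr0.
  by rewrite row // !scalerDr !scalerA.
under eq_bigr => i _ do under eq_bigr => j _ do rewrite term.
rewrite sum2_scale3; congr (_ *: _ + _ *: _ + _ *: _).
- by rewrite expr2 /sum_O mulr_suml; apply: eq_bigr => i _; rewrite /rowsum mulr_suml.
- have rowl : \sum_k \sum_l O k l * rowsum k = sum_r2.
    by apply: eq_bigr => k _; rewrite -mulr_suml expr2.
  have rowr : \sum_k \sum_l O k l * rowsum l = sum_r2.
    by rewrite exchange_big; apply: eq_bigr => l _; rewrite -mulr_suml rowsum_sym expr2.
  transitivity (2%:R * (\sum_k \sum_l O k l * rowsum k + \sum_k \sum_l O k l * rowsum l)).
    rewrite -sum2D mulr_sumr; apply: eq_bigr => k _; rewrite mulr_sumr.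
    by apply: eq_bigr => l _; ring.
  by rewrite rowl rowr; ring.
- rewrite /sum_O2 mulr_sumr; apply: eq_bigr => i _; rewrite mulr_sumr.
  by apply: eq_bigr => j _; rewrite mulrCA expr2.
Qed.

End SymmetrizeQuadraticSquare.

Definition sym_quartic (R : realType) (n : nat) (a11 a12 a22 b11 b12 b22 g : R) :
    {mpoly R[n]} :=
  let p := psum R n in
  a11 *: (p 1%N ^+ 4) + (2 * a12) *: (p 2%N * p 1%N ^+ 2)
        + a22 *: (p 2%N ^+ 2)
        + b11 *: (p 2%N * p 1%N ^+ 2 - p 1%N ^+ 4)
        + (2 * b12) *: (p 3%N * p 1%N - p 2%N * p 1%N ^+ 2)
        + b22 *: (p 4%N - p 2%N ^+ 2)
        + g *: ((2%:R)^-1 *: (p 1%N ^+ 4) - p 2%N * p 1%N ^+ 2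
                + (((n ^ 2)%:R - (3 * n)%:R + 3%:R) / (2 * (n ^ 2)%:R))
                    *: (p 2%N ^+ 2)
                + (((2 * n)%:R - 2%:R) / (n ^ 2)%:R) *: (p 3%N * p 1%N)
                + ((1 - n%:R) / (2 * (n ^ 2)%:R)) *: p 4%N).

Section SymQuartic.
Variables (R : realType) (n : nat).
Local Notation sym_quartic := (@sym_quartic R n).

Lemma sym_quarticE a11 a12 a22 b11 b12 b22 g :
  sym_quartic a11 a12 a22 b11 b12 b22 g =
  pc4 n (a11 - b11 + g / 2%:R) (2 * a12 + b11 - 2 * b12 - g)
     (a22 - b22 + g * (((n ^ 2)%:R - (3 * n)%:R + 3%:R) / (2 * (n ^ 2)%:R)))
     (2 * b12 + g * (((2 * n)%:R - 2%:R) / (n ^ 2)%:R))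
     (b22 + g * ((1 - n%:R) / (2 * (n ^ 2)%:R))).
Proof. by rewrite /sym_quartic /pc4; scalar_ring. Qed.

Lemma sym_quarticD a11 a12 a22 b11 b12 b22 g a11' a12' a22' b11' b12' b22' g' :
  sym_quartic a11 a12 a22 b11 b12 b22 g + sym_quartic a11' a12' a22' b11' b12' b22' g' =
  sym_quartic (a11 + a11') (a12 + a12') (a22 + a22')
    (b11 + b11') (b12 + b12') (b22 + b22') (g + g').
Proof. by rewrite !sym_quarticE pc4D; f_equal; ring. Qed.

Lemma sym_quartic0 : sym_quartic 0 0 0 0 0 0 0 = 0.
Proof. by rewrite /sym_quartic !(mulr0, scale0r, addr0). Qed.

End SymQuartic.

Section AffineSums.
Variables (R : numFieldType) (n : nat).
Local Notation N := (n%:R : R).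

Lemma sum_affine_mul (x y : 'I_n -> R) (a b c a' b' c' : R) :
  \sum_i (a * x i + b * y i + c) * (a' * x i + b' * y i + c') =
  a * a' * \sum_i x i ^+ 2 + (a * b' + b * a') * \sum_i x i * y i
  + b * b' * \sum_i y i ^+ 2 + (a * c' + a' * c) * \sum_i x i
  + (b * c' + b' * c) * \sum_i y i + N * (c * c').
Proof.
have -> : N * (c * c') = \sum_(i < n) (c * c') by rewrite sumr_const card_ord mulr_natl.
by rewrite !mulr_sumr -!big_split /=; apply: eq_bigr => i _; ring.
Qed.

Lemma sum_quadratic (x : 'I_n -> R) (a b c : R) :
  \sum_i (a * x i ^+ 2 + b * x i + c) = a * \sum_i x i ^+ 2 + b * \sum_i x i + N * c.
Proof.
have -> : N * c = \sum_(i < n) c by rewrite sumr_const card_ord mulr_natl.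
by rewrite !mulr_sumr -!big_split.
Qed.

Lemma sum2_shift_sqr (c : R) (x : 'I_n -> R) :
  \sum_i \sum_j (c + x i + x j) ^+ 2 = N ^+ 2 * c ^+ 2 + 2%:R * N * \sum_i x i ^+ 2
  + 2%:R * (\sum_i x i) ^+ 2 + 4%:R * N * c * \sum_i x i.
Proof.
set s1 := \sum_i x i; set s2 := \sum_i x i ^+ 2.
transitivity (\sum_i (N * x i ^+ 2 + (2%:R * s1 + 2%:R * N * c) * x i
   + (s2 + 2%:R * c * s1 + N * c ^+ 2))); last by rewrite sum_quadratic -/s1 -/s2; ring.
apply: eq_bigr => i _.
transitivity (\sum_j (1 * x j ^+ 2 + (2%:R * (c + x i)) * x j + (c + x i) ^+ 2)).
  by apply: eq_bigr => j _; ring.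
by rewrite sum_quadratic -/s1 -/s2; ring.
Qed.

End AffineSums.

Section IsotypicComponents.
Variables (R : realType) (n : nat) (d : 'I_n -> R) (O : 'I_n -> 'I_n -> R).
Hypothesis n_gt3 : (3 < n)%N.
Hypothesis O_sym : forall i j, O i j = O j i.
Hypothesis O_diag0 : forall i, O i i = 0.
Local Notation N := (n%:R : R).
Local Notation r := (rowsum O).

Local Ltac stat_field := rewrite /sum_O /sum_d2 /sum_dr /sum_r2 /sum_d; field;
  rewrite ?(natr_gt3_neq0 n_gt3).

Lemma sum2_O_shift (c : R) (x : 'I_n -> R) :
  \sum_i \sum_j O i j * (c + x i + x j) = c * sum_O O + 2%:R * \sum_i r i * x i.
Proof.
transitivity (\sum_i ((c + x i) * r i + \sum_j O i j * x j)).
  apply: eq_bigr => i _; rewrite /rowsum mulr_sumr -big_split /=.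
  by apply: eq_bigr => j _; ring.
rewrite big_split /=.
have -> : \sum_i \sum_j O i j * x j = \sum_j r j * x j.
  rewrite exchange_big; apply: eq_bigr => j _.
  by rewrite -mulr_suml rowsum_sym // mulrC.
rewrite /sum_O mulr_sumr [2%:R * _]mulr_sumr -!big_split /=.
by apply: eq_bigr => i _; ring.
Qed.

(* The S_n-isotypic decomposition of diagq d + offq O: the trivial component
   is given by the means of d and of O ([omean]), the standard one by the
   vectors [avec] and [bvec] of sum zero (built from the deviations of d and
   of the row sums of O), and the rest of O is [resid], whose off-diagonal
   part has zero row sums. *)
Definition omean := sum_O O / (N * (N - 1)).
Definition rowdev i := (r i - sum_O O / N) / (N - 2%:R).
Definition avec i := d i - sum_d d / N - 2%:R * rowdev i.
Definition bvec i := 2%:R * N * rowdev i.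
Definition resid i j := O i j - omean - rowdev i - rowdev j.
Definition resid_norm := \sum_i \sum_j resid i j ^+ 2 - \sum_i resid i i ^+ 2.

Let k := (N - 2%:R)^-1.
Let c := - (sum_O O / N / (N - 2%:R)).

Lemma rowdevE i : rowdev i = k * r i + 0 * r i + c.
Proof. by rewrite /rowdev /k /c; field; rewrite ?(natr_gt3_neq0 n_gt3). Qed.

Lemma sum_rowdev : \sum_i rowdev i = 0.
Proof.
under eq_bigr => i _ do rewrite rowdevE mul0r addr0.
rewrite big_split /= -mulr_sumr sumr_const card_ord -mulr_natl -/(sum_O O) /k /c.
by field; rewrite ?(natr_gt3_neq0 n_gt3).
Qed.

Lemma sum_rowdev2 :
  \sum_i rowdev i ^+ 2 = (sum_r2 O - sum_O O ^+ 2 / N) / (N - 2%:R) ^+ 2.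
Proof.
rewrite (eq_bigr (fun i => (k * r i + 0 * r i + c) * (k * r i + 0 * r i + c))).
  by rewrite sum_affine_mul /k /c; stat_field.
by move=> i _; rewrite rowdevE expr2.
Qed.

Lemma sum_rowsum_rowdev :
  \sum_i r i * rowdev i = (sum_r2 O - sum_O O ^+ 2 / N) / (N - 2%:R).
Proof.
rewrite (eq_bigr (fun i => (1 * r i + 0 * r i + 0) * (k * r i + 0 * r i + c))).
  by rewrite sum_affine_mul /k /c; stat_field.
by move=> i _; rewrite rowdevE; ring.
Qed.

Lemma sum_bvec2 :
  \sum_i bvec i ^+ 2 = 4%:R * N ^+ 2 * (sum_r2 O - sum_O O ^+ 2 / N) / (N - 2%:R) ^+ 2.
Proof.
rewrite (eq_bigr (fun i => (2%:R * N * k * r i + 0 * r i + 2%:R * N * c) *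
                          (2%:R * N * k * r i + 0 * r i + 2%:R * N * c))).
  by rewrite sum_affine_mul /k /c; stat_field.
by move=> i _; rewrite /bvec rowdevE; ring.
Qed.

Lemma sum_bvec_avec : \sum_i bvec i * avec i =
  2%:R * N * ((sum_dr d O - sum_d d * sum_O O / N) / (N - 2%:R)
              - 2%:R * (sum_r2 O - sum_O O ^+ 2 / N) / (N - 2%:R) ^+ 2).
Proof.
rewrite (eq_bigr (fun i => (0 * d i + 2%:R * N * k * r i + 2%:R * N * c) *
                 (1 * d i + (- 2%:R * k) * r i + (- (sum_d d / N) - 2%:R * c)))).
  by rewrite sum_affine_mul /k /c; stat_field.
by move=> i _; rewrite /bvec /avec rowdevE; ring.
Qed.

Lemma sum_avec2 : \sum_i avec i ^+ 2 =
  (sum_d2 d - sum_d d ^+ 2 / N) - 4%:R * (sum_dr d O - sum_d d * sum_O O / N) / (N - 2%:R)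
  + 4%:R * (sum_r2 O - sum_O O ^+ 2 / N) / (N - 2%:R) ^+ 2.
Proof.
rewrite (eq_bigr (fun i => (1 * d i + (- 2%:R * k) * r i + (- (sum_d d / N) - 2%:R * c)) *
                          (1 * d i + (- 2%:R * k) * r i + (- (sum_d d / N) - 2%:R * c)))).
  by rewrite sum_affine_mul /k /c; stat_field.
by move=> i _; rewrite /avec rowdevE; ring.
Qed.

Lemma resid_normE : resid_norm = sum_O2 O - sum_O O ^+ 2 / (N * (N - 1))
  - 2%:R * (sum_r2 O - sum_O O ^+ 2 / N) / (N - 2%:R).
Proof.
have all_entries : \sum_i \sum_j resid i j ^+ 2 =
    sum_O2 O + (- 2%:R) * (omean * sum_O O + 2%:R * \sum_i r i * rowdev i)
    + (N ^+ 2 * omean ^+ 2 + 2%:R * N * \sum_i rowdev i ^+ 2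
       + 2%:R * (\sum_i rowdev i) ^+ 2 + 4%:R * N * omean * \sum_i rowdev i).
  rewrite -sum2_O_shift -sum2_shift_sqr /sum_O2 mulr_sumr.
  under [X in _ + X + _]eq_bigr => i _ do rewrite mulr_sumr.
  rewrite -!sum2D; apply: eq_bigr => i _; apply: eq_bigr => j _.
  by rewrite /resid; ring.
have diagonal : \sum_i resid i i ^+ 2 =
    4%:R * \sum_i rowdev i ^+ 2 + (4%:R * omean) * \sum_i rowdev i + N * omean ^+ 2.
  by rewrite -sum_quadratic; apply: eq_bigr => i _; rewrite /resid O_diag0; ring.
rewrite /resid_norm all_entries diagonal sum_rowdev sum_rowdev2 sum_rowsum_rowdev /omean.
by stat_field.
Qed.

Definition alpha1 := N * sum_O O / (N - 1).
Definition alpha2 := sum_d d - sum_O O / (N - 1).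
Definition beta11 := N / (N - 1) * \sum_i bvec i ^+ 2.
Definition beta12 := N / (N - 1) * \sum_i bvec i * avec i.
Definition beta22 := N / (N - 1) * \sum_i avec i ^+ 2.
Definition gamma := 4%:R * N ^+ 3 / ((N - 1) * (N - 2%:R) * (N - 3%:R)) * resid_norm.

Lemma symmetrize_quadratic_sqr : symmetrize ((diagq d + offq O) ^+ 2) =
  sym_quartic n (alpha1 ^+ 2) (alpha1 * alpha2) (alpha2 ^+ 2) beta11 beta12 beta22 gamma.
Proof.
rewrite sqrrD expr2 expr2 !linearD /= symmetrize_diagq_sqr symmetrize_diagq_offq //.
rewrite symmetrize_offq_sqr // mmean22 // mmean31 // mmean211 // mmean1111 // pc_psum4.
rewrite !(pc4B, pc4Z, pc4D) sym_quarticE /beta11 /beta12 /beta22 /gamma.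
rewrite sum_bvec2 // sum_bvec_avec // sum_avec2 // resid_normE // /alpha1 /alpha2.
by rewrite !natrX !natrM; f_equal; field; rewrite ?(natr_gt3_neq0 n_gt3).
Qed.

End IsotypicComponents.

Section BinaryForms.
Variable R : realFieldType.

Definition binary_form_nonneg (a b c : R) :=
  forall x y, 0 <= a * x ^+ 2 + 2 * b * x * y + c * y ^+ 2.

Lemma binary_form_nonneg0 : binary_form_nonneg 0 0 0.
Proof. by move=> x y; rewrite !(mul0r, mulr0, addr0). Qed.

Lemma binary_form_nonnegD a b c a' b' c' :
  binary_form_nonneg a b c -> binary_form_nonneg a' b' c' ->
  binary_form_nonneg (a + a') (b + b') (c + c').
Proof.
move=> nn nn' x y; have := addr_ge0 (nn x y) (nn' x y).
by congr (_ <= _); ring.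
Qed.

Lemma binary_form_nonneg_sqr u v : binary_form_nonneg (u ^+ 2) (u * v) (v ^+ 2).
Proof. by move=> x y; have := sqr_ge0 (u * x + v * y); congr (_ <= _); ring. Qed.

Lemma binary_form_nonneg_gram (I : finType) (k : R) (u v : I -> R) : 0 <= k ->
  binary_form_nonneg (k * \sum_i u i ^+ 2) (k * \sum_i u i * v i) (k * \sum_i v i ^+ 2).
Proof.
move=> k_ge0 x y; rewrite (_ : _ + _ = k * \sum_i (u i * x + v i * y) ^+ 2).
  by apply: mulr_ge0 => //; apply: sumr_ge0 => i _; exact: sqr_ge0.
transitivity (k * (x ^+ 2 * \sum_i u i ^+ 2 + 2 * x * y * \sum_i u i * v i
  + y ^+ 2 * \sum_i v i ^+ 2)); first by ring.
by congr (_ * _); rewrite !mulr_sumr -!big_split /=; apply: eq_bigr => i _; ring.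
Qed.

End BinaryForms.

Lemma psd_sym2 (R : realType) (a b c : R) :
  binary_form_nonneg a b c -> psd (sym2 a b c).
Proof.
move=> nn; split.
  by apply/matrixP => i j; rewrite !mxE; case: i => [[|[|?]] ?]; case: j => [[|[|?]] ?].
move=> v; rewrite !(big_ord_recl, big_ord0, mxE) /=.
by have := nn (v ord0 ord0) (v (lift ord0 ord0) ord0); congr (_ <= _); ring.
Qed.

Section Coefficients.
Variables (R : realType) (n : nat) (d : 'I_n -> R) (O : 'I_n -> 'I_n -> R).
Hypothesis n_gt3 : (3 < n)%N.
Local Notation N := (n%:R : R).

Let N1_gt0 : 0 < N - 1. Proof. by rewrite subr_gt0 ltr1n (ltn_trans _ n_gt3). Qed.
Let N2_gt0 : 0 < N - 2%:R. Proof. by rewrite subr_gt0 ltr_nat (ltn_trans _ n_gt3). Qed.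
Let N3_gt0 : 0 < N - 3%:R. Proof. by rewrite subr_gt0 ltr_nat. Qed.

Lemma beta_nonneg : binary_form_nonneg (beta11 O) (beta12 d O) (beta22 d O).
Proof.
by apply: binary_form_nonneg_gram; rewrite divr_ge0 ?ler0n // ltW.
Qed.

Lemma resid_norm_ge0 : 0 <= resid_norm O.
Proof.
rewrite /resid_norm -sumrB; apply: sumr_ge0 => i _.
by rewrite (bigD1 i) //= addrC addrK; apply: sumr_ge0 => j _; exact: sqr_ge0.
Qed.

Lemma gamma_ge0 : 0 <= gamma O.
Proof.
apply: mulr_ge0; last exact: resid_norm_ge0.
apply: divr_ge0; first by rewrite mulr_ge0 ?exprn_ge0 ?ler0n.
by rewrite !mulr_ge0 // ltW.
Qed.

End Coefficients.

Section QuadraticForms.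
Variables (R : realType) (n : nat).
Local Notation MP := {mpoly R[n]}.

Definition is_quadform (h : MP) := exists d O,
  [/\ forall i j, O i j = O j i, forall i, O i i = 0 & h = diagq d + offq O].

Lemma mdeg2P (m : 'X_{1..n}) : mdeg m = 2%N -> exists a b, m = (U_(a) + U_(b))%MM.
Proof.
move=> m2; case: (pickP (fun a => m a != 0%N)) => [a ma | m0]; last first.
  by move: m2; rewrite mdegE big1 // => i _; move: (m0 i) => /negbFE /eqP.
have m_split : m = (m - U_(a) + U_(a))%MM by rewrite submK // lep1mP.
have : mdeg (m - U_(a))%MM == 1%N.
  by move: m2; rewrite {1}m_split mdegD mdeg1 addn1 => -[->].
by case/mdeg1P => b /eqP mb; exists b, a; rewrite {1}m_split mb.
Qed.

Lemma is_quadform0 : is_quadform 0.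
Proof.
exists (fun _ => 0), (fun _ _ => 0); split => //.
by rewrite /diagq /offq !big1 ?addr0 // => i _; rewrite ?big1 // => *; rewrite scale0r.
Qed.

Lemma is_quadformD h h' : is_quadform h -> is_quadform h' -> is_quadform (h + h').
Proof.
move=> [d [O [Osym Odiag ->]]] [d' [O' [Osym' Odiag' ->]]].
exists (fun i => d i + d' i), (fun i j => O i j + O' i j); split.
- by move=> i j; rewrite Osym Osym'.
- by move=> i; rewrite Odiag Odiag' addr0.
rewrite addrACA; congr (_ + _).
  by rewrite /diagq -big_split; apply: eq_bigr => i _; rewrite scalerDl.
rewrite /offq -big_split; apply: eq_bigr => i _.
by rewrite -big_split; apply: eq_bigr => j _; rewrite scalerDl.
Qed.

Lemma is_quadformZX c a b : is_quadform (c *: ('X_a * 'X_b)).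
Proof.
have [<-|ab] := eqVneq a b.
  exists (fun i => c * kron R i a), (fun _ _ => 0); split => //.
  rewrite /diagq sum_scale_kron expr2 /offq big1 ?addr0 // => i _.
  by rewrite big1 // => j _; rewrite scale0r.
exists (fun _ => 0),
  (fun i j => c / 2%:R * (kron R i a * kron R j b + kron R i b * kron R j a)); split.
- by move=> i j; ring.
- move=> i; have [->|ia] := eqVneq i a; first by rewrite (kron_neq R ab) kronxx; ring.
  by rewrite (kron_neq R ia); ring.
rewrite /diagq /offq big1 ?add0r => [|i _]; last by rewrite scale0r.
under eq_bigr => i _ do under eq_bigr => j _ do rewrite mulrDr scalerDl !mulrA.
under eq_bigr => i _ do rewrite big_split /= !sum_scale_kron.
rewrite big_split /= (sum_scale_kron (fun i => 'X_i * 'X_b) (fun _ => c / 2%:R)).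
rewrite (sum_scale_kron (fun i => 'X_i * 'X_a) (fun _ => c / 2%:R)) mulrC -scalerDl.
by congr (_ *: _); field; rewrite ?pnatr_eq0.
Qed.

Lemma is_quadform_homog2 (h : MP) : h \is 2.-homog -> is_quadform h.
Proof.
move=> /dhomogP h2; rewrite [h]mpolyE.
elim: (msupp h) h2 => [|m s IHs] h2; first by rewrite big_nil; exact: is_quadform0.
rewrite big_cons; apply: is_quadformD.
  have [a [b ->]] := mdeg2P (h2 m (mem_head _ _)).
  by rewrite mpolyXD; exact: is_quadformZX.
by apply: IHs => m' m's; apply: h2; rewrite inE m's orbT.
Qed.

End QuadraticForms.

Section SumsOfSquares.
Variables (R : realFieldType) (n : nat).
Local Notation MP := {mpoly R[n]}.

Lemma mlead_max_exists (s : seq MP) : s != [::] ->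
  exists2 x, x \in s & forall y, y \in s -> (mlead y <= mlead x)%O.
Proof.
elim: s => [|x s IHs] // _; have [->|s_nil] := eqVneq s [::].
  by exists x; rewrite ?mem_head // => y; rewrite inE => /eqP ->.
have [z zs z_max] := IHs s_nil; have [zx|xz] := leP (mlead z) (mlead x).
  exists x; first exact: mem_head.
  by move=> y; rewrite inE => /orP[/eqP -> //|ys]; exact: le_trans (z_max y ys) zx.
exists z; first by rewrite inE zs orbT.
by move=> y; rewrite inE => /orP[/eqP ->|ys]; [exact: ltW | exact: z_max].
Qed.

Lemma mcoeff_sqr_le_mlead (q : MP) M : (mlead q <= M)%O ->
  (q ^+ 2)@_(M *+ 2)%MM = (q@_M) ^+ 2.
Proof.
rewrite le_eqVlt => /orP[/eqP <-|lt_qM]; first by rewrite mleadcX.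
rewrite (mcoeff_gt_mlead lt_qM) expr0n /=; apply: mcoeff_gt_mlead.
apply: (le_lt_trans (mleadX_le _ _)).
by rewrite !mulmS !mulm0n !addm0; apply: ltm_add.
Qed.

(* The largest leading monomial M among the q's yields the coefficient
   sum_q (q@_M)^2 > 0 of M^2 in sum_q q^2: no cancellation can occur there. *)
Lemma sos_mcoeff_gt0 (s : seq MP) q0 : q0 \in s -> q0 != 0 -> exists M,
  0 < (\sum_(q <- s) q ^+ 2)@_(M *+ 2)%MM /\ forall q, q \in s -> (mlead q <= M)%O.
Proof.
move=> q0s q0_neq0; set l := [seq q <- s | q != 0].
have q0l : q0 \in l by rewrite mem_filter q0_neq0.
have l_nil : l != [::] by apply: contraTneq q0l => ->.
have [x xl x_max] := mlead_max_exists l_nil.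
move: (xl); rewrite mem_filter => /andP[x_neq0 xs].
have le_mlead q : q \in s -> (mlead q <= mlead x)%O.
  move=> qs; have [->|q_neq0] := eqVneq q 0; first by rewrite mlead0 le0m.
  by apply: x_max; rewrite mem_filter q_neq0.
exists (mlead x); split => //.
rewrite raddf_sum /= (eq_big_seq (fun q => (q@_(mlead x)) ^+ 2)) => [|q qs]; last first.
  by rewrite mcoeff_sqr_le_mlead // le_mlead.
apply: (@lt_le_trans _ _ ((x@_(mlead x)) ^+ 2)).
  by rewrite lt0r sqr_ge0 andbT sqrf_eq0 mleadc_eq0.
rewrite (perm_big _ (perm_to_rem xs)) big_cons /= lerDl big_seq.
by apply: sumr_ge0 => y _; exact: sqr_ge0.
Qed.

Lemma sos_eq0 (s : seq MP) : \sum_(q <- s) q ^+ 2 = 0 -> forall q, q \in s -> q = 0.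
Proof.
move=> sos0 q qs; apply/eqP/negPn/negP => q_neq0.
have [M [M_gt0 _]] := sos_mcoeff_gt0 qs q_neq0.
by move: M_gt0; rewrite sos0 mcoeff0 ltxx.
Qed.

Lemma sos_homog_msupp (f : MP) (s : seq MP) k : f \is (k.*2).-homog ->
  f = \sum_(q <- s) q ^+ 2 ->
  forall q, q \in s -> forall m, m \in msupp q -> (mdeg m <= k)%N.
Proof.
move=> f_homog fE q qs m mq.
have q_neq0 : q != 0 by apply: contraTneq mq => ->; rewrite msupp0.
have [M [M_gt0 le_M]] := sos_mcoeff_gt0 qs q_neq0.
have M2_supp : (M *+ 2)%MM \in msupp f by rewrite mcoeff_msupp fE gt_eqF.
have : mdeg (M *+ 2)%MM = k.*2 := dhomog_mf f_homog M2_supp.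
rewrite mdegMn -muln2 => /eqP; rewrite eqn_mul2r /= => /eqP <-.
by apply: lemc_mdeg; apply: le_trans (le_M q qs); exact: msupp_le_mlead.
Qed.

Local Notation ph := (pihomog mdeg).

Lemma pihomog_homog (q : MP) e k : q \is e.-homog -> ph k q = if k == e then q else 0.
Proof.
move=> q_homog; have [->|ke] := eqVneq k e; first exact: pihomog_dE.
by apply: (pihomog_ne0 _ q_homog); rewrite eq_sym.
Qed.

Lemma pihomog_le2E (q : MP) : (forall m, m \in msupp q -> (mdeg m <= 2)%N) ->
  q = ph 0 q + ph 1 q + ph 2 q.
Proof.
move=> le2; have q_size : (mmeasure mdeg q <= 3)%N.
  by rewrite -/(msize q) msizeE; apply/bigmax_leqP_seq => m mq _; rewrite ltnS le2.
by rewrite {1}(pihomog_partitionE q_size) !big_ord_recr big_ord0 /= add0r.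
Qed.

Lemma pihomog_sqr (c l h : MP) k :
  c \is 0.-homog -> l \is 1.-homog -> h \is 2.-homog ->
  ph k ((c + l + h) ^+ 2) =
    (if k == 0%N then c * c else 0) + (if k == 1%N then c * l else 0) *+ 2
    + ((if k == 2%N then l * l else 0) + (if k == 2%N then c * h else 0) *+ 2)
    + (if k == 3%N then l * h else 0) *+ 2 + (if k == 4%N then h * h else 0).
Proof.
move=> c0 l1 h2; rewrite (_ : (c + l + h) ^+ 2 = c * c + (c * l) *+ 2
  + (l * l + (c * h) *+ 2) + (l * h) *+ 2 + h * h); last by ring.
rewrite !linearD /= ?raddfMn /= (pihomog_homog k (dhomogM c0 c0)).
rewrite (pihomog_homog k (dhomogM c0 l1)) (pihomog_homog k (dhomogM l1 l1)).
by rewrite (pihomog_homog k (dhomogM c0 h2)) (pihomog_homog k (dhomogM l1 h2))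
  (pihomog_homog k (dhomogM h2 h2)).
Qed.

(* The constant parts, and then the linear parts, of the q's have squares
   summing to the components of f of degree 0 and 2, which vanish. *)
Lemma sos_homog4 (f : MP) (s : seq MP) : f \is 4.-homog ->
  f = \sum_(q <- s) q ^+ 2 -> f = \sum_(q <- s) (ph 2 q) ^+ 2.
Proof.
move=> f4 fE.
have qE q : q \in s -> q = ph 0 q + ph 1 q + ph 2 q.
  by move=> qs; apply: pihomog_le2E; apply: (@sos_homog_msupp f s 2).
have phP k q : ph k q \is k.-homog by exact: pihomogP.
have const0 q : q \in s -> ph 0 q = 0.
  move=> qs; apply: (@sos_eq0 (map (ph 0) s)); last exact: map_f.
  rewrite big_map -[RHS](pihomog_homog 0 f4) fE raddf_sum /=; apply: eq_big_seq => q' q's.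
  by rewrite {2}(qE q' q's) pihomog_sqr ?phP //= ?mul0rn !addr0 expr2.
have lin0 q : q \in s -> ph 1 q = 0.
  move=> qs; apply: (@sos_eq0 (map (ph 1) s)); last exact: map_f.
  rewrite big_map -[RHS](pihomog_homog 2 f4) fE raddf_sum /=; apply: eq_big_seq => q' q's.
  rewrite {2}(qE q' q's) pihomog_sqr ?phP //= const0 //.
  by rewrite mul0r ?mul0rn !add0r !addr0 expr2.
rewrite fE; apply: eq_big_seq => q qs.
by rewrite {1}(qE q qs) const0 // lin0 // !add0r.
Qed.

End SumsOfSquares.

Lemma symmetrize_sum_quadform_sqr (R : realType) (n : nat) (hs : seq {mpoly R[n]}) :
  (3 < n)%N -> (forall h, h \in hs -> is_quadform h) ->
  exists a11 a12 a22 b11 b12 b22 g : R,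
  [/\ 0 <= g, binary_form_nonneg a11 a12 a22, binary_form_nonneg b11 b12 b22 &
      symmetrize (\sum_(h <- hs) h ^+ 2) = sym_quartic n a11 a12 a22 b11 b12 b22 g].
Proof.
move=> n_gt3; elim: hs => [|h hs IHhs] hs_quad.
  exists 0, 0, 0, 0, 0, 0, 0.
  by split; rewrite ?big_nil ?linear0 ?sym_quartic0 //; exact: binary_form_nonneg0.
have hs_quad' h' : h' \in hs -> is_quadform h'.
  by move=> h'hs; apply: hs_quad; rewrite inE h'hs orbT.
have [a11 [a12 [a22 [b11 [b12 [b22 [g [g_ge0 a_nn b_nn sumE]]]]]]]] := IHhs hs_quad'.
have [d [O [O_sym O_diag0 ->]]] := hs_quad h (mem_head _ _).
exists (alpha1 O ^+ 2 + a11), (alpha1 O * alpha2 d O + a12), (alpha2 d O ^+ 2 + a22),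
  (beta11 O + b11), (beta12 d O + b12), (beta22 d O + b22), (gamma O + g); split.
- by rewrite addr_ge0 // gamma_ge0.
- exact: binary_form_nonnegD (binary_form_nonneg_sqr _ _) a_nn.
- exact: binary_form_nonnegD (beta_nonneg d O n_gt3) b_nn.
by rewrite big_cons linearD /= sumE symmetrize_quadratic_sqr // sym_quarticD.
Qed.

Theorem theorem6p1 (R : realType) (n : nat) (hn : (4 <= n)%N)
    (f : {mpoly R[n]}) (hsym : f \is symmetric) (hhom : f \is 4.-homog)
    (hsos : is_sos f) :
  let p := @psum R n in
  exists (a11 a12 a22 b11 b12 b22 g : R),
    [/\ 0 <= g, psd (sym2 a11 a12 a22), psd (sym2 b11 b12 b22) &
    f = a11 *: (p 1%N ^+ 4) + (2 * a12) *: (p 2%N * p 1%N ^+ 2)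
        + a22 *: (p 2%N ^+ 2)
        + b11 *: (p 2%N * p 1%N ^+ 2 - p 1%N ^+ 4)
        + (2 * b12) *: (p 3%N * p 1%N - p 2%N * p 1%N ^+ 2)
        + b22 *: (p 4%N - p 2%N ^+ 2)
        + g *: ((2%:R)^-1 *: (p 1%N ^+ 4) - p 2%N * p 1%N ^+ 2
                + (((n ^ 2)%:R - (3 * n)%:R + 3%:R) / (2 * (n ^ 2)%:R))
                    *: (p 2%N ^+ 2)
                + (((2 * n)%:R - 2%:R) / (n ^ 2)%:R) *: (p 3%N * p 1%N)
                + ((1 - n%:R) / (2 * (n ^ 2)%:R)) *: p 4%N)].
Proof.
move=> p; have [s fE] := hsos.
have quad_parts : forall h, h \in map (pihomog mdeg 2) s -> is_quadform h.
  by move=> h /mapP[q _ ->]; apply: is_quadform_homog2; exact: pihomogP.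
have [a11 [a12 [a22 [b11 [b12 [b22 [g [g_ge0 a_nn b_nn symE]]]]]]]] :=
  symmetrize_sum_quadform_sqr hn quad_parts.
exists a11, a12, a22, b11, b12, b22, g; split => //; try exact: psd_sym2.
rewrite -(symmetrize_id hsym) (sos_homog4 hhom fE).
by rewrite -(big_map (pihomog mdeg 2) xpredT (fun h => h ^+ 2)) symE.
Qed.
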